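(* Let $n\ge2$, $A\in\mathbb{R}^{n\times n}$ symmetric with eigenvalues $\lambda_1\ge\dots\ge\lambda_n$, $\rho=\lambda_1-\lambda_n$, and suppose $\delta:=\lambda_{n-1}-\lambda_n>0$. Let $\gamma>0$ and $0<\beta\le\big[2(\frac73+\gamma)+(\frac23+\gamma)\frac{\rho}{\delta}\big]^{-1}\delta$. Then $f(\mathbf{z})=\frac12\mathbf{z}^TA\mathbf{z}+\frac{\beta}{2}\sum_kz_k^4$ on $\mathbb{S}^{n-1}$ is $(\gamma\beta,\gamma\beta,\gamma\beta)$-strict-saddle.
   Context: $\mathbb{S}^{n-1}$ is the unit sphere in $\mathbb{R}^n$, $\mathcal{T}_{\mathbf{z}}=\{\mathbf{v}:\mathbf{v}^T\mathbf{z}=0\}$. For $\mathbf{z}\in\mathbb{S}^{n-1}$ let $2\lambda=\mathbf{z}^TA\mathbf{z}+2\beta\|\mathbf{z}\|_4^4$, $\mathrm{grad} f(\mathbf{z})=[A+2\beta\,\mathrm{diag}(z_1^2,\dots,z_n^2)]\mathbf{z}-2\lambda\mathbf{z}$, and $H_f(\mathbf{z})[\mathbf{v}]=\mathbf{v}^T[A+6\beta\,\mathrm{diag}(z_1^2,\dots,z_n^2)-2\lambda I]\mathbf{v}$. For $\xi,\epsilon,\zeta>0$, $f$ is $(\xi,\epsilon,\zeta)$-strict-saddle if for every $\mathbf{z}\in\mathbb{S}^{n-1}$ at least one holds: (1) $H_f(\mathbf{z})[\mathbf{v}]\ge\xi$ for all $\mathbf{v}\in\mathcal{T}_{\mathbf{z}}\cap\mathbb{S}^{n-1}$;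 (2) $\|\mathrm{grad} f(\mathbf{z})\|\ge\epsilon$; (3) there is $\mathbf{v}\in\mathcal{T}_{\mathbf{z}}\cap\mathbb{S}^{n-1}$ with $H_f(\mathbf{z})[\mathbf{v}]\le-\zeta$. *)

From HB Require Import structures.
From mathcomp Require Import all_boot all_order all_algebra.
From mathcomp Require Import reals.
Set Implicit Arguments. Unset Strict Implicit. Unset Printing Implicit Defensive.
Import Order.TTheory GRing.Theory Num.Theory.
Local Open Scope ring_scope.

Section StrictSaddle.
Variables (R : realType) (n : nat).

Definition vnorm (v : 'cV[R]_n) : R := Num.sqrt (\sum_i v i 0 ^+ 2).

Definition on_sphere (z : 'cV[R]_n) : Prop := vnorm z = 1.

Definition tangent (z v : 'cV[R]_n) : Prop := (v^T *m z) 0 0 = 0.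

Definition Dsq (z : 'cV[R]_n) : 'M[R]_n := diag_mx (\row_i (z i 0 ^+ 2)).

Definition fobj (A : 'M[R]_n) (beta : R) (z : 'cV[R]_n) : R :=
  (z^T *m A *m z) 0 0 / 2 + beta / 2 * \sum_k z k 0 ^+ 4.

Definition two_lambda (A : 'M[R]_n) (beta : R) (z : 'cV[R]_n) : R :=
  (z^T *m A *m z) 0 0 + 2 * beta * \sum_k z k 0 ^+ 4.

Definition rgrad (A : 'M[R]_n) (beta : R) (z : 'cV[R]_n) : 'cV[R]_n :=
  (A + (2 * beta) *: Dsq z) *m z - two_lambda A beta z *: z.

Definition rhess (A : 'M[R]_n) (beta : R) (z v : 'cV[R]_n) : R :=
  (v^T *m (A + (6 * beta) *: Dsq z - (two_lambda A beta z)%:M) *m v) 0 0.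

Definition strict_saddle (A : 'M[R]_n) (beta xi eps zeta : R) : Prop :=
  forall z : 'cV[R]_n, on_sphere z ->
    (forall v, tangent z v -> on_sphere v -> xi <= rhess A beta z v)
    \/ eps <= vnorm (rgrad A beta z)
    \/ (exists v, tangent z v /\ on_sphere v /\ rhess A beta z v <= - zeta).

End StrictSaddle.

From HB Require Import structures.
From mathcomp Require Import all_boot all_order all_algebra.
From mathcomp Require Import reals.
From mathcomp Require Import complex zify ring lra.
Import Order.TTheory GRing.Theory Num.Theory.
Local Open Scope ring_scope.

(* Let u be a unit eigenvector for the smallest eigenvalue L of A, which is simple
   with gap delta.  The spectral theorem gives z^T A z >= L + delta (1 - (u.z)^2) on
   the sphere.  Fix z on the sphere and put s2 = 1 - (u.z)^2, E = z^T A z - L >= delta s2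
   and p = u - (u.z) z, the tangent direction towards u, so that |p|^2 = s2.  Then
   <grad f(z), p> = -(u.z) E + 2 beta <z^3, p> with |<z^3, p>| <= |p| / 2, while
   H_f(z)[p] <= -(2 s2 - 1) E + 3 beta s2, and every unit tangent vector v satisfies
   H_f(z)[v] >= delta (1 - s2) - E - 2 beta.  So either the gradient is at least
   gamma beta, or H_f(z)[p / |p|] <= - gamma beta, or (1 - s2) E^2 = O(beta^2 s2) and
   (2 s2 - 1) E = O(beta s2); in the last case, since beta is small against delta,
   E <= (delta - (2 + gamma) beta) / 2 and the lower bound on H_f(z)[v] is >= gamma beta. *)

Set Implicit Arguments. Unset Strict Implicit. Unset Printing Implicit Defensive.

Lemma char_poly_conj (F : fieldType) n (P B : 'M[F]_n) : P \in unitmx ->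
  char_poly (invmx P *m B *m P) = char_poly B.
Proof.
move=> Pu; rewrite /char_poly /char_poly_mx.
have eX : ('X%:M : 'M[{poly F}]_n) = map_mx polyC (invmx P) *m 'X%:M *m map_mx polyC P.
  by rewrite scalar_mxC -mulmxA -map_mxM mulVmx // map_mx1 mulmx1.
rewrite {1}eX !map_mxM -mulmxBl -mulmxBr !det_mulmx mulrC mulrA -det_mulmx.
by rewrite -map_mxM mulmxV // map_mx1 det1 mul1r.
Qed.

Section DotProduct.
Variables (R : realFieldType) (n : nat).
Implicit Types x y w : 'cV[R]_n.

Definition dot x y : R := (x^T *m y) 0 0.

Lemma dotE x y : dot x y = \sum_i x i 0 * y i 0.
Proof. by rewrite /dot mxE; apply: eq_bigr => i _; rewrite mxE. Qed.

Lemma dotC x y : dot x y = dot y x.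
Proof. by rewrite !dotE; apply: eq_bigr => i _; rewrite mulrC. Qed.

Lemma dotDl x y w : dot (x + y) w = dot x w + dot y w.
Proof. by rewrite /dot raddfD /= mulmxDl mxE. Qed.

Lemma dotBl x y w : dot (x - y) w = dot x w - dot y w.
Proof. by rewrite /dot raddfB /= mulmxBl !mxE. Qed.

Lemma dotZl a x y : dot (a *: x) y = a * dot x y.
Proof. by rewrite /dot linearZ /= -scalemxAl mxE. Qed.

Lemma dotDr x y w : dot w (x + y) = dot w x + dot w y.
Proof. by rewrite /dot mulmxDr mxE. Qed.

Lemma dotBr x y w : dot w (x - y) = dot w x - dot w y.
Proof. by rewrite /dot mulmxBr !mxE. Qed.

Lemma dotZr a x y : dot y (a *: x) = a * dot y x.
Proof. by rewrite /dot -scalemxAr mxE. Qed.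

Lemma dot0r x : dot x 0 = 0.
Proof. by rewrite /dot mulmx0 mxE. Qed.

Lemma dot_mulmxl (M : 'M[R]_n) x y : dot (M *m x) y = dot x (M^T *m y).
Proof. by rewrite /dot trmx_mul mulmxA. Qed.

Lemma dotxx_ge0 x : 0 <= dot x x.
Proof. by rewrite dotE; apply: sumr_ge0 => i _; rewrite -expr2 sqr_ge0. Qed.

Lemma dotxx_eq0 x : dot x x = 0 -> x = 0.
Proof.
rewrite dotE => /psumr_eq0P xx0; apply/matrixP => i j; rewrite ord1 mxE.
have /eqP := xx0 (fun k _ => ltac:(by rewrite -expr2 sqr_ge0)) i isT.
by rewrite mulf_eq0 orbb => /eqP.
Qed.

Lemma cauchy_schwarz x y : dot x y ^+ 2 <= dot x x * dot y y.
Proof.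
have := dotxx_ge0 (dot y y *: x - dot x y *: y).
rewrite !(dotBl, dotBr, dotZl, dotZr) (dotC y x) => h.
have [yy_gt0 | yy_le0] := ltrP 0 (dot y y).
  have : 0 <= dot y y * (dot x x * dot y y - dot x y ^+ 2) by nra.
  by rewrite pmulr_rge0 // subr_ge0.
have -> : y = 0 by apply: dotxx_eq0; apply/le_anti; rewrite yy_le0 dotxx_ge0.
by rewrite !dot0r expr0n mulr0.
Qed.

End DotProduct.

(* Testing the hypothesis at x = u gives (r1.u)^2 + (r2.u)^2 >= 1, so by Bessel's
   inequality r1 and r2 are both multiples of u. *)
Lemma gap_bound_eigenvector (R : realFieldType) n (A : 'M[R]_n) (L K : R)
    (u r1 r2 : 'cV[R]_n) :
  L < K -> dot u u = 1 -> A *m u = L *: u -> dot r1 r1 + dot r2 r2 <= 1 ->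
  (forall x, L * dot x x + (K - L) * (dot x x - dot r1 x ^+ 2 - dot r2 x ^+ 2)
               <= dot x (A *m x)) ->
  forall x, L * dot x x + (K - L) * (dot x x - dot u x ^+ 2) <= dot x (A *m x).
Proof.
move=> LK uu Au r12 gapr x.
have ru1 : 1 <= dot r1 u ^+ 2 + dot r2 u ^+ 2.
  by have := gapr u; rewrite Au dotZr uu (dotC r1) (dotC r2); nra.
have ru_le r : dot r u ^+ 2 <= dot r r by have := cauchy_schwarz r u; rewrite uu mulr1.
set w := x - dot u x *: u.
have uw : dot u w = 0 by rewrite dotBr dotZr uu mulr1 subrr.
have bessel r : dot r w ^+ 2 <= (dot r r - dot r u ^+ 2) * dot w w.
  have -> : dot r w = dot (r - dot r u *: u) w by rewrite dotBl dotZl uw mulr0 subr0.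
  have -> : dot r r - dot r u ^+ 2 = dot (r - dot r u *: u) (r - dot r u *: u).
    by rewrite !(dotBl, dotBr, dotZl, dotZr) uu (dotC u r); ring.
  exact: cauchy_schwarz.
have rw0 : dot r1 w ^+ 2 + dot r2 w ^+ 2 <= 0.
  by have := bessel r1; have := bessel r2; have := dotxx_ge0 w; nra.
have r1w : dot r1 w = 0.
  by apply/eqP; rewrite -sqrf_eq0 eq_le sqr_ge0 andbT; have := sqr_ge0 (dot r2 w); lra.
have r2w : dot r2 w = 0.
  by apply/eqP; rewrite -sqrf_eq0 eq_le sqr_ge0 andbT; have := sqr_ge0 (dot r1 w); lra.
have rx r : dot r w = 0 -> dot r x = dot u x * dot r u.
  by rewrite /w dotBr dotZr => /eqP; rewrite subr_eq0 => /eqP.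
have proj_le : dot u x ^+ 2 * (dot r1 u ^+ 2 + dot r2 u ^+ 2) <= dot u x ^+ 2.
  by rewrite ler_piMr ?sqr_ge0 //; have := ru_le r1; have := ru_le r2; lra.
have KL0 : 0 <= K - L by rewrite subr_ge0 ltW.
have := ler_wpM2l KL0 proj_le.
by have := gapr x; rewrite (rx _ r1w) (rx _ r2w) !exprMn; lra.
Qed.

Section SphereQuartics.
Variables (R : realFieldType) (n : nat).
Implicit Types z p : 'cV[R]_n.

Lemma entry_sqr_le1 z i : dot z z = 1 -> z i 0 ^+ 2 <= 1.
Proof.
rewrite dotE => <-; rewrite (bigD1 i) //= expr2 lerDl.
by apply: sumr_ge0 => j _; rewrite -expr2 sqr_ge0.
Qed.

Lemma sum_quartic_ge0 z : 0 <= \sum_i z i 0 ^+ 4.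
Proof. by apply: sumr_ge0 => i _; rewrite (_ : 4 = 2 * 2)%N // exprM sqr_ge0. Qed.

Lemma sum_quartic_le1 z : dot z z = 1 -> \sum_i z i 0 ^+ 4 <= 1.
Proof.
move=> zz; rewrite -zz dotE; apply: ler_sum => i _.
by have := entry_sqr_le1 i zz; have := sqr_ge0 (z i 0); nra.
Qed.

Lemma sum_sextic_le z : dot z z = 1 -> \sum_i z i 0 ^+ 6 <= \sum_i z i 0 ^+ 4.
Proof.
move=> zz; apply: ler_sum => i _.
by have := entry_sqr_le1 i zz; have := sqr_ge0 (z i 0); nra.
Qed.

Definition dsq_form z p : R := \sum_i z i 0 ^+ 2 * p i 0 ^+ 2.

Lemma dsq_form_ge0 z p : 0 <= dsq_form z p.
Proof. by apply: sumr_ge0 => i _; rewrite mulr_ge0 ?sqr_ge0. Qed.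

Lemma dsq_formZ z p k : dsq_form z (k *: p) = k ^+ 2 * dsq_form z p.
Proof. by rewrite /dsq_form mulr_sumr; apply: eq_bigr => i _; rewrite mxE; ring. Qed.

(* The matrix z p^T + p z^T has squared Frobenius norm 2 |p|^2 and diagonal 2 z_k p_k. *)
Lemma dsq_form_orth z p : dot z z = 1 -> dot z p = 0 -> 2 * dsq_form z p <= dot p p.
Proof.
move=> zz zp.
have double_sum : \sum_k \sum_l (z k 0 * p l 0 + z l 0 * p k 0) ^+ 2 = 2 * dot p p.
  transitivity (\sum_k \sum_l (z k 0 ^+ 2 * p l 0 ^+ 2 + z l 0 ^+ 2 * p k 0 ^+ 2
                               + 2 * (z k 0 * p k 0) * (z l 0 * p l 0))).
    by apply: eq_bigr => k _; apply: eq_bigr => l _; ring.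
  under eq_bigr do rewrite !big_split /=.
  rewrite !big_split /= [X in _ + X + _]exchange_big /=.
  have sqr_sum (x : 'cV[R]_n) : \sum_i x i 0 ^+ 2 = dot x x.
    by rewrite dotE; apply: eq_bigr => i _; rewrite expr2.
  by rewrite -!big_distrlr /= -mulr_sumr !sqr_sum -dotE zz zp; ring.
have diag_le : 4 * dsq_form z p <= \sum_k \sum_l (z k 0 * p l 0 + z l 0 * p k 0) ^+ 2.
  rewrite /dsq_form mulr_sumr; apply: ler_sum => k _.
  rewrite (bigD1 k) //= -[4 * _]addr0.
  rewrite (_ : 4 * _ = (z k 0 * p k 0 + z k 0 * p k 0) ^+ 2); last by ring.
  by rewrite lerD2l; apply: sumr_ge0 => l _; exact: sqr_ge0.
by move: diag_le; rewrite double_sum; lra.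
Qed.

End SphereQuartics.

Section RealSymmetricSpectral.
Local Open Scope sesquilinear_scope.
Variables (R : realType) (n : nat).
Local Notation toC := (real_complex R).

(* The spectral theorem of MathComp is stated over algebraically closed fields, so A is
   diagonalised as a Hermitian matrix over R[i]; its eigenvalues are nevertheless real. *)
Lemma real_symmetric_spectral (A : 'M[R]_n) : A^T = A ->
  exists (d : 'I_n -> R) (P : 'M[R[i]]_n),
  [/\ P *m P^t* = 1%:M, map_mx toC A = P^t* *m diag_mx (\row_i (d i)%:C%C) *m P
    & char_poly A = \prod_(i < n) ('X - (d i)%:P)].
Proof.
move=> symA; set Ac := map_mx toC A.
have Aherm : Ac \is hermsymmx.
  apply: realsym_hermsym.
    by apply/is_hermitianmxP; rewrite scale1r map_mx_id // map_trmx symA.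
  by apply/mxOverP => i j; apply/complex_realP; exists (A i j); rewrite mxE.
have /orthomx_spectralP AcE := hermitian_normalmx Aherm.
set P := spectralmx Ac in AcE; set dC := spectral_diag Ac in AcE.
have PU : P \is unitarymx := spectral_unitarymx Ac.
have dCE i : dC 0 i = (complex.Re (dC 0 i))%:C%C.
  by rewrite RRe_real //; exact/mxOverP/hermitian_spectral_diag_real.
have DE : dC = \row_i (complex.Re (dC 0 i))%:C%C by apply/rowP => i; rewrite mxE -dCE.
exists (fun i => complex.Re (dC 0 i)), P; split.
- exact/unitarymxP.
- by rewrite {1}AcE invmx_unitary // -DE.
- apply: (@map_poly_inj _ _ toC).
  rewrite map_char_poly -/Ac AcE char_poly_conj ?spectral_unit //.
  rewrite char_poly_trig ?diag_mx_is_trig // map_prod_XsubC.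
  by apply: eq_bigr => i _; rewrite mxE eqxx mulr1n {1}dCE.
Qed.

Lemma unitary_quadratic_form (B : 'M[R]_n) (P : 'M[R[i]]_n) (d : 'I_n -> R)
    (x : 'cV[R]_n) :
  map_mx toC B = P^t* *m diag_mx (\row_i (d i)%:C%C) *m P ->
  let y := P *m map_mx toC x in
  dot x (B *m x) = \sum_i d i * (complex.Re (y i 0) ^+ 2 + complex.Im (y i 0) ^+ 2).
Proof.
move=> BE y; apply: (@complexI R); rewrite rmorph_sum /=.
have xC : (map_mx toC x)^t* = map_mx toC x^T.
  by apply/matrixP => i j; rewrite !mxE; apply/CrealP; rewrite complex_real.
have -> : toC (dot x (B *m x)) = (map_mx toC (x^T *m (B *m x))) 0 0 by rewrite mxE.
rewrite !map_mxM -xC BE -!mulmxA mulmxA.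
have -> : (map_mx toC x)^t* *m P^t* = y^t* by rewrite /y trmx_mul map_mxM.
rewrite mxE; apply: eq_bigr => i _.
rewrite mul_diag_mx !mxE rmorphM /= add_Re2_Im2 sqr_normc mulrCA.
by congr (_ * _); exact: mulrC.
Qed.

End RealSymmetricSpectral.

Lemma count_index_enum (T : finType) (p : pred T) : count p (index_enum T) = #|p|.
Proof. by rewrite -sum1_card -sum1_count. Qed.

Lemma perm_simple_last (R : realDomainType) n (d : 'I_n -> R) (lam : nat -> R) :
  perm_eq [seq d i | i <- index_enum 'I_n]
          [seq lam (nat_of_ord j) | j <- index_enum 'I_n] ->
  (forall i j : nat, (i <= j < n)%N -> lam j <= lam i) ->
  lam n.-1 < lam n.-2 ->
  exists i0, d i0 = lam n.-1 /\ forall i, i != i0 -> lam n.-2 <= d i.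
Proof.
move=> pe sorted_lam gap.
have n2 : (2 <= n)%N by move: gap; case: (n) => [|[|m]] //; rewrite ltxx.
set L := lam n.-1.
have d_lam i : exists j : 'I_n, d i = lam j.
  have : d i \in [seq lam (nat_of_ord j) | j <- index_enum 'I_n].
    by rewrite -(perm_mem pe) map_f ?mem_index_enum.
  by case/mapP => j _ ->; exists j.
have lamL (j : 'I_n) : lam j = L -> j = n.-1 :> nat.
  move=> lamjL; apply/eqP; rewrite eqn_leq -ltnS prednK ?ltn_ord //=; last by lia.
  rewrite leqNgt; apply/negP => ltj; have := sorted_lam j n.-2.
  by rewrite lamjL (_ : (j <= n.-2 < n)%N) ?leNgt ?gap //; lia.
have [i0 di0] : exists i0, d i0 = L.
  have n1 : (n.-1 < n)%N by lia.
  have : L \in [seq d i | i <- index_enum 'I_n].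
    by rewrite (perm_mem pe) (map_f (fun j : 'I_n => lam j) (mem_index_enum (Ordinal n1))).
  by case/mapP => i _ ->; exists i.
exists i0; split => // i neq_ii0; have [j dij] := d_lam i.
have [jL | jNL] := eqVneq (j : nat) n.-1.
  have : (count (pred1 L) [seq d i | i <- index_enum 'I_n] <= 1)%N.
    rewrite (permP pe) count_map count_index_enum.
    apply/card_le1_eqP => j1 j2; rewrite !inE /= => /eqP/lamL j1L /eqP/lamL j2L.
    by apply: val_inj; rewrite /= j1L j2L.
  rewrite count_map count_index_enum leqNgt => /negP[]; apply/card_gt1P; exists i0, i.
  by rewrite !inE /= di0 dij jL eqxx eq_sym.
by rewrite dij; apply: sorted_lam; have := ltn_ord j; lia.
Qed.

Section SpectralGap.
Local Open Scope sesquilinear_scope.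
Variables (R : realType) (n : nat) (A : 'M[R]_n) (lam : nat -> R).
Hypotheses (symA : A^T = A) (charA : char_poly A = \prod_(i < n) ('X - (lam i)%:P)).
Hypotheses (sorted_lam : forall i j : nat, (i <= j < n)%N -> lam j <= lam i)
  (gap : lam n.-1 < lam n.-2).
Local Notation toC := (real_complex R).

Lemma spectral_gap_bound : exists r1 r2 : 'cV[R]_n, dot r1 r1 + dot r2 r2 = 1 /\
  forall x, lam n.-1 * dot x x + (lam n.-2 - lam n.-1) *
    (dot x x - dot r1 x ^+ 2 - dot r2 x ^+ 2) <= dot x (A *m x).
Proof.
have [d [P [PU AE charAd]]] := real_symmetric_spectral symA.
have pe : perm_eq [seq d i | i <- index_enum 'I_n]
                  [seq lam (nat_of_ord j) | j <- index_enum 'I_n].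
  by apply: prod_XsubC_eq; rewrite !big_map -charAd charA.
have [i0 [di0 d_ge]] := perm_simple_last pe sorted_lam gap.
have IE : map_mx toC 1%:M = P^t* *m diag_mx (\row_i (1 : R)%:C%C) *m P.
  rewrite map_mx1 (_ : \row_i _ = const_mx 1) ?diag_const_mx ?mulmx1 ?(mulmx1C PU) //.
  by apply/rowP => i; rewrite !mxE.
have ReM (z : R[i]) (b : R) : complex.Re (z * b%:C%C) = complex.Re z * b.
  by case: z => ? ?; simpc.
have ImM (z : R[i]) (b : R) : complex.Im (z * b%:C%C) = complex.Im z * b.
  by case: z => ? ?; simpc.
exists (\col_k complex.Re (P i0 k)), (\col_k complex.Im (P i0 k)); split.
  rewrite !dotE -big_split /=; apply: (@complexI R); rewrite rmorph_sum rmorph1.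
  have /matrixP/(_ i0 i0) := PU; rewrite !mxE eqxx mulr1n => <-.
  apply: eq_bigr => k _; rewrite !mxE -!expr2.
  exact: etrans (add_Re2_Im2 _) (sqr_normc _).
move=> x; set y := P *m map_mx toC x.
pose N i := complex.Re (y i 0) ^+ 2 + complex.Im (y i 0) ^+ 2.
have N_ge0 i : 0 <= N i by rewrite addr_ge0 ?sqr_ge0.
have Re_y : complex.Re (y i0 0) = dot (\col_k complex.Re (P i0 k)) x.
  by rewrite dotE mxE raddf_sum; apply: eq_bigr => k _; rewrite !mxE; exact: ReM.
have Im_y : complex.Im (y i0 0) = dot (\col_k complex.Im (P i0 k)) x.
  by rewrite dotE mxE raddf_sum; apply: eq_bigr => k _; rewrite !mxE; exact: ImM.
have xx : dot x x = \sum_i N i.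
  rewrite -{2}[x]mul1mx (unitary_quadratic_form x IE).
  by apply: eq_bigr => i _; rewrite mul1r.
rewrite (unitary_quadratic_form x AE) -/y xx -Re_y -Im_y.
rewrite (bigD1 i0) //= [X in _ <= X](bigD1 i0) //= di0.
have : lam n.-2 * \sum_(i | i != i0) N i <= \sum_(i | i != i0) d i * N i.
  by rewrite mulr_sumr; apply: ler_sum => i /d_ge ?; exact: ler_wpM2r.
by have := N_ge0 i0; rewrite /N; lra.
Qed.

Lemma smallest_eigenvector : exists u : 'cV[R]_n, dot u u = 1 /\ A *m u = lam n.-1 *: u.
Proof.
have n1 : (n.-1 < n)%N by move: gap; case: (n) => [|m] //; rewrite ltxx.
have : eigenvalue A (lam n.-1).
  rewrite eigenvalue_root_char charA; apply/rootP; rewrite horner_prod.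
  apply/eqP; rewrite prodf_seq_eq0; apply/hasP; exists (Ordinal n1).
    exact: mem_index_enum.
  by rewrite /= hornerXsubC subrr.
case/eigenvalueP => v vA v0; set u := v^T.
have Au : A *m u = lam n.-1 *: u by rewrite /u -{1}symA -trmx_mul vA linearZ.
have uu_gt0 : 0 < dot u u.
  rewrite lt_def dotxx_ge0 andbT; apply: contra v0 => /eqP/dotxx_eq0 u0.
  by rewrite -[v]trmxK -/u u0 trmx0.
exists ((Num.sqrt (dot u u))^-1 *: u); split; last by rewrite -scalemxAr Au !scalerA mulrC.
by rewrite dotZl dotZr mulrA -expr2 exprVn sqr_sqrtr ?ltW // mulVf ?gt_eqF.
Qed.

Lemma smallest_eigenvector_gap : exists u : 'cV[R]_n,
  [/\ dot u u = 1, A *m u = lam n.-1 *: u &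
     forall x, lam n.-1 * dot x x + (lam n.-2 - lam n.-1) * (dot x x - dot u x ^+ 2)
                 <= dot x (A *m x)].
Proof.
have [u [uu Au]] := smallest_eigenvector; have [r1 [r2 [r12 gapr]]] := spectral_gap_bound.
by exists u; split => //; apply: gap_bound_eigenvector gapr => //; rewrite r12.
Qed.

End SpectralGap.

Section RiemannianDerivatives.
Variables (R : realType) (n : nat).
Implicit Types (A : 'M[R]_n) (x z v : 'cV[R]_n).

Lemma vnorm_dot x : vnorm x = Num.sqrt (dot x x).
Proof. by rewrite /vnorm dotE; congr Num.sqrt; apply: eq_bigr => i _; rewrite expr2. Qed.

Lemma on_sphereE x : on_sphere x <-> dot x x = 1.
Proof.
rewrite /on_sphere vnorm_dot; split => [xx1|->]; last exact: sqrtr1.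
by rewrite -(sqr_sqrtr (dotxx_ge0 x)) xx1 expr1n.
Qed.

Lemma Dsq_mulmx z v i : (Dsq z *m v) i 0 = z i 0 ^+ 2 * v i 0.
Proof. by rewrite /Dsq mul_diag_mx !mxE. Qed.

Lemma two_lambdaE A b z :
  two_lambda A b z = dot z (A *m z) + 2 * b * \sum_i z i 0 ^+ 4.
Proof. by rewrite /two_lambda -mulmxA. Qed.

Lemma rgradE A b z :
  rgrad A b z = A *m z + (2 * b) *: (Dsq z *m z) - two_lambda A b z *: z.
Proof. by rewrite /rgrad mulmxDl -scalemxAl. Qed.

Lemma rhessE A b z v :
  rhess A b z v = dot v (A *m v) + 6 * b * dsq_form z v - two_lambda A b z * dot v v.
Proof.
rewrite /rhess -mulmxA mulmxBl mulmxDl -scalemxAl mul_scalar_mx.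
rewrite -/(dot v _) dotBr dotDr !dotZr; congr (_ + _ * _ - _).
by rewrite dotE; apply: eq_bigr => i _; rewrite Dsq_mulmx; ring.
Qed.

Lemma rhessZ A b z v k : rhess A b z (k *: v) = k ^+ 2 * rhess A b z v.
Proof. by rewrite !rhessE -scalemxAr !(dotZl, dotZr) dsq_formZ; ring. Qed.

(* Against p, z^3 acts like z^3 - z/2, whose squared norm is at most 1/4 as z_i^6 <= z_i^4. *)
Lemma cube_dot_orth z p :
  dot z z = 1 -> dot p z = 0 -> dot (Dsq z *m z) p ^+ 2 <= dot p p / 4.
Proof.
move=> zz pz; set c := Dsq z *m z; set h := c - 2^-1 *: z.
have hp : dot h p = dot c p by rewrite /h dotBl dotZl (dotC z) pz mulr0 subr0.
have cz : dot c z = \sum_i z i 0 ^+ 4.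
  by rewrite dotE; apply: eq_bigr => i _; rewrite Dsq_mulmx; ring.
have cc : dot c c = \sum_i z i 0 ^+ 6.
  by rewrite dotE; apply: eq_bigr => i _; rewrite Dsq_mulmx; ring.
have hh : dot h h <= 4^-1.
  rewrite /h !(dotBl, dotBr, dotZl, dotZr) zz (dotC z c) cz cc.
  by have := sum_sextic_le zz; lra.
have := cauchy_schwarz h p; rewrite hp => cs.
by apply: le_trans cs _; rewrite mulrC ler_wpM2l ?dotxx_ge0 //; lra.
Qed.

End RiemannianDerivatives.

Lemma beta_small (R : realFieldType) (delta rho gamma beta : R) :
  0 < delta -> delta <= rho -> 0 < gamma -> 0 < beta ->
  beta <= delta / (2 * (7%:R / 3%:R + gamma) + (2%:R / 3%:R + gamma) * (rho / delta)) ->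
  (16 / 3 + 3 * gamma) * beta <= delta.
Proof.
move=> d_gt0 d_le_r g_gt0 b_gt0; set D := _ + _ * (rho / delta).
have t_ge1 : 1 <= rho / delta by rewrite ler_pdivlMr // mul1r.
have D_ge : 16 / 3 + 3 * gamma <= D.
  have : gamma <= gamma * (rho / delta) by rewrite ler_peMr // ltW.
  by rewrite /D; lra.
have D_gt0 : 0 < D by apply: lt_le_trans D_ge; lra.
rewrite ler_pdivlMr // => bD; apply: le_trans bD.
by rewrite [beta * D]mulrC ler_pM2r.
Qed.

Lemma sqrD_le (R : realDomainType) (x y X Y : R) : 0 <= X -> 0 <= Y ->
  x ^+ 2 <= X ^+ 2 -> y ^+ 2 <= Y ^+ 2 -> (x + y) ^+ 2 <= (X + Y) ^+ 2.
Proof.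
move=> X0 Y0 xX yY.
have nx : `|x| <= X by rewrite -ler_sqr ?nnegrE ?normr_ge0 // real_normK ?num_real.
have ny : `|y| <= Y by rewrite -ler_sqr ?nnegrE ?normr_ge0 // real_normK ?num_real.
rewrite -real_normK ?num_real // ler_sqr ?nnegrE ?normr_ge0 ?addr_ge0 //.
exact: le_trans (ler_normD _ _) (lerD nx ny).
Qed.

Lemma saddle_margin (R : realFieldType) (E s d b g : R) :
  0 <= s -> d * s <= E -> (2 * s - 1) * E <= (3 + g) * b * s ->
  (1 - s) * E ^+ 2 <= (1 + g) ^+ 2 * b ^+ 2 * s ->
  (16 / 3 + 3 * g) * b <= d -> 0 < b -> 0 < g ->
  g * b <= d * (1 - s) - E - 2 * b.
Proof.
move=> s_ge0 dsE hessE gradE bd b_gt0 g_gt0.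
have d_gt0 : 0 < d by nra.
suff : 2 * E <= d - (2 + g) * b by lra.
have [E_le0 | E_gt0] := leP E 0; first by nra.
have hess_d : (2 * s - 1) * d <= (3 + g) * b.
  rewrite -(ler_pM2r E_gt0).
  have k_ge0 : 0 <= (3 + g) * b by rewrite mulr_ge0 ?ltW //; lra.
  by have := ler_wpM2r (ltW d_gt0) hessE; have := ler_wpM2l k_ge0 dsE; nra.
have grad_d : (1 - s) * E * d <= (1 + g) ^+ 2 * b ^+ 2.
  rewrite -(ler_pM2r E_gt0).
  have := ler_wpM2r (ltW d_gt0) gradE; have := ler_wpM2l (sqr_ge0 ((1 + g) * b)) dsE.
  by rewrite exprMn; nra.
have E_gap : E * (d - (3 + g) * b) <= 2 * (1 + g) ^+ 2 * b ^+ 2.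
  have : d - (3 + g) * b <= 2 * ((1 - s) * d) by lra.
  by move/(ler_wpM2l (ltW E_gt0)); lra.
have gap_prod : 4 * (1 + g) ^+ 2 * b ^+ 2 <= (d - (3 + g) * b) * (d - (2 + g) * b).
  have lb : (7 / 3 + 2 * g) * b * ((10 / 3 + 2 * g) * b)
             <= (d - (3 + g) * b) * (d - (2 + g) * b).
    by apply: ler_pM; nra.
  by apply: le_trans lb; nra.
rewrite -(ler_pM2l (_ : 0 < d - (3 + g) * b)); nra.
Qed.

Section StrictSaddleAt.
Variables (R : realType) (n : nat) (A : 'M[R]_n) (u z : 'cV[R]_n) (L delta beta gamma : R).
Hypotheses (symA : A^T = A) (uu : dot u u = 1) (Au : A *m u = L *: u).
Hypothesis gapA : forall x, L * dot x x + delta * (dot x x - dot u x ^+ 2) <= dot x (A *m x).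
Hypotheses (beta_gt0 : 0 < beta) (gamma_gt0 : 0 < gamma)
  (beta_le : (16 / 3 + 3 * gamma) * beta <= delta).
Hypothesis zz : dot z z = 1.

Local Notation a := (dot u z).
Local Notation s2 := (1 - dot u z ^+ 2).
Local Notation E := (dot z (A *m z) - L).
Local Notation p := (u - dot u z *: z).

Lemma delta_gt0 : 0 < delta.
Proof. by apply: lt_le_trans beta_le; rewrite mulr_gt0 //; move: gamma_gt0; lra. Qed.

Lemma dot_p_z : dot p z = 0.
Proof. by rewrite dotBl dotZl zz mulr1 subrr. Qed.

Lemma dot_p_p : dot p p = s2.
Proof. by rewrite !(dotBl, dotBr, dotZl, dotZr) uu zz (dotC z u); ring. Qed.

Lemma s2_ge0 : 0 <= s2.
Proof. by rewrite -dot_p_p dotxx_ge0. Qed.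

Lemma excess_ge : delta * s2 <= E.
Proof. by have := gapA z; rewrite zz; lra. Qed.

Lemma rhess_tangent_ge v : tangent z v -> on_sphere v ->
  delta * (1 - s2) - E - 2 * beta <= rhess A beta z v.
Proof.
move=> vz /on_sphereE vv; have {}vz : dot v z = 0 := vz.
have uv : dot u v ^+ 2 <= s2.
  have -> : dot u v = dot p v by rewrite dotBl dotZl (dotC z) vz mulr0 subr0.
  by have := cauchy_schwarz p v; rewrite dot_p_p vv mulr1.
have d_uv : delta * dot u v ^+ 2 <= delta * s2.
  by apply: ler_wpM2l => //; exact/ltW/delta_gt0.
have W_ge0 : 0 <= beta * dsq_form z v by rewrite mulr_ge0 ?dsq_form_ge0 // ltW.
have s4_le : beta * \sum_i z i 0 ^+ 4 <= beta by rewrite ler_piMr ?sum_quartic_le1 // ltW.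
by have := gapA v; rewrite rhessE two_lambdaE vv mulr1; lra.
Qed.

Lemma dot_u_Az : dot u (A *m z) = L * a.
Proof. by rewrite dotC dot_mulmxl symA Au dotZr dotC. Qed.

Lemma rhess_p_le : rhess A beta z p <= - ((2 * s2 - 1) * E) + 3 * beta * s2.
Proof.
have pAp : dot p (A *m p) = L * (1 - 2 * a ^+ 2) + a ^+ 2 * dot z (A *m z).
  rewrite mulmxBr -scalemxAr Au !(dotBl, dotBr, dotZl, dotZr) uu dot_u_Az (dotC z u).
  by ring.
have W : 6 * beta * dsq_form z p <= 3 * beta * s2.
  have := dsq_form_orth zz (etrans (dotC _ _) dot_p_z); rewrite dot_p_p => W.
  by have := ler_wpM2l (ltW beta_gt0) W; lra.
have s4_ge0 : 0 <= beta * (\sum_i z i 0 ^+ 4) * s2.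
  by rewrite !mulr_ge0 ?sum_quartic_ge0 ?s2_ge0 // ltW.
by rewrite rhessE two_lambdaE dot_p_p pAp; lra.
Qed.

Lemma grad_dot_p : dot (rgrad A beta z) p = - (a * E) + 2 * beta * dot (Dsq z *m z) p.
Proof.
have Azp : dot (A *m z) p = L * a - a * dot z (A *m z).
  by rewrite dotBr dotZr dotC dot_u_Az [dot (A *m z) z]dotC.
by rewrite rgradE dotBl dotDl !dotZl Azp (dotC z p) dot_p_z; ring.
Qed.

Lemma small_grad_excess : vnorm (rgrad A beta z) < gamma * beta ->
  (1 - s2) * E ^+ 2 <= (1 + gamma) ^+ 2 * beta ^+ 2 * s2.
Proof.
move=> small; set g := rgrad A beta z; set r := Num.sqrt s2.
have rr : r ^+ 2 = s2 := sqr_sqrtr s2_ge0.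
have r_ge0 : 0 <= r := sqrtr_ge0 s2.
have gg : dot g g <= (gamma * beta) ^+ 2.
  rewrite -(sqr_sqrtr (dotxx_ge0 g)) -vnorm_dot.
  by have := sqrtr_ge0 (dot g g); rewrite -vnorm_dot -/g; nra.
have gp : (- dot g p) ^+ 2 <= (gamma * beta * r) ^+ 2.
  rewrite sqrrN exprMn rr; apply: le_trans (cauchy_schwarz g p) _.
  by rewrite dot_p_p; have := s2_ge0; nra.
have cp : (2 * beta * dot (Dsq z *m z) p) ^+ 2 <= (beta * r) ^+ 2.
  have := cube_dot_orth zz dot_p_z; rewrite dot_p_p !exprMn rr => cp.
  by have := ler_wpM2l (sqr_ge0 beta) cp; lra.
have gbr_ge0 : 0 <= gamma * beta * r by rewrite !mulr_ge0 // ltW.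
have br_ge0 : 0 <= beta * r by rewrite mulr_ge0 // ltW.
have := sqrD_le gbr_ge0 br_ge0 gp cp.
have -> : - dot g p + 2 * beta * dot (Dsq z *m z) p = a * E by rewrite grad_dot_p; ring.
have -> : (gamma * beta * r + beta * r) ^+ 2 = (1 + gamma) ^+ 2 * beta ^+ 2 * s2.
  by rewrite -rr; ring.
by have -> : (1 - s2) * E ^+ 2 = (a * E) ^+ 2 by ring.
Qed.

Lemma strict_saddle_at :
  (forall v, tangent z v -> on_sphere v -> gamma * beta <= rhess A beta z v)
  \/ gamma * beta <= vnorm (rgrad A beta z)
  \/ (exists v, tangent z v /\ on_sphere v /\ rhess A beta z v <= - (gamma * beta)).
Proof.
have [big | small] := lerP (gamma * beta) (vnorm (rgrad A beta z)); first by right; left.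
have convex_case : (2 * s2 - 1) * E <= (3 + gamma) * beta * s2 ->
    forall v, tangent z v -> on_sphere v -> gamma * beta <= rhess A beta z v.
  move=> hessE v vz vv; apply: le_trans (rhess_tangent_ge vz vv).
  exact: saddle_margin s2_ge0 excess_ge hessE (small_grad_excess small)
           beta_le beta_gt0 gamma_gt0.
have [s2_le0 | s2_gt0] := lerP s2 0.
  left; apply: convex_case; have a2 : a ^+ 2 = 1 by have := s2_ge0; lra.
  by have := excess_ge; rewrite a2 subrr; lra.
have [hess_gt | hess_le] := ltrP (- (gamma * beta) * s2) (rhess A beta z p).
  by left; apply: convex_case; have := rhess_p_le; lra.
right; right; set r := Num.sqrt s2.
have r_gt0 : 0 < r by rewrite sqrtr_gt0.
have rr : r ^+ 2 = s2 by rewrite sqr_sqrtr // ltW.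
exists (r^-1 *: p); split; [|split].
- by rewrite /tangent -/(dot _ _) dotZl dot_p_z mulr0.
- by apply/on_sphereE; rewrite dotZl dotZr dot_p_p mulrA -expr2 exprVn rr mulVf // gt_eqF.
- by rewrite rhessZ exprVn rr mulrC ler_pdivrMr //; lra.
Qed.

End StrictSaddleAt.

Unset Implicit Arguments. Set Strict Implicit. Set Printing Implicit Defensive.

Theorem theorem14 (R : realType) (n : nat) (A : 'M[R]_n) (lam : nat -> R)
    (gamma beta : R) :
  (2 <= n)%N ->
  A^T = A ->
  (* lam 0 >= lam 1 >= ... >= lam (n-1) are the eigenvalues of A, with multiplicity *)
  char_poly A = \prod_(i < n) ('X - (lam i)%:P) ->
  (forall i j : nat, (i <= j < n)%N -> lam j <= lam i) ->
  let rho := lam 0%N - lam n.-1 in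
  let delta := lam n.-2 - lam n.-1 in
  0 < delta ->
  0 < gamma ->
  0 < beta ->
  beta <= delta / (2 * (7%:R / 3%:R + gamma) + (2%:R / 3%:R + gamma) * (rho / delta)) ->
  strict_saddle A beta (gamma * beta) (gamma * beta) (gamma * beta).
Proof.
move=> n2 symA charA sorted_lam rho delta delta_gt0 gamma_gt0 beta_gt0 beta_le z /on_sphereE zz.
have gap : lam n.-1 < lam n.-2 by rewrite -subr_gt0.
have delta_le_rho : delta <= rho by rewrite lerD2r; apply: sorted_lam; lia.
have [u [uu Au gapA]] := smallest_eigenvector_gap symA charA sorted_lam gap.
exact: strict_saddle_at symA uu Au gapA beta_gt0 gamma_gt0
  (beta_small delta_gt0 delta_le_rho gamma_gt0 beta_gt0 beta_le) zz.
Qed.
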